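(* Let $G$ and $H$ be finite simple graphs without isolated vertices, of orders $n$ and $m$ respectively (with $n,m\ge 2$). Then \[ \gamma_{2t}(G\Box H)\ge\tfrac{3}{2}\min\{n,m\}. \]
   Context: For a graph $G=(V,E)$, a set $S\subseteq V$ is a total $2$-dominating set if every vertex of $V$ (including those in $S$) is adjacent to at least $2$ vertices of $S$; $\gamma_{2t}(G)$ is the minimum cardinality of such a set. $G\Box H$ denotes the Cartesian product: vertex set $V(G)\times V(H)$, with $(u_1,v_1)\sim(u_2,v_2)$ iff either $u_1=u_2$ and $v_1\sim v_2$, or $v_1=v_2$ and $u_1\sim u_2$. *)

From mathcomp Require Import all_boot.
Set Implicit Arguments. Unset Strict Implicit. Unset Printing Implicit Defensive.

Definition simple_graph (T : finType) (e : rel T) : Prop :=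
  symmetric e /\ irreflexive e.

Definition no_isolated (T : finType) (e : rel T) : Prop :=
  forall x : T, exists y : T, e x y.

Definition cart_prod (T1 T2 : finType) (e1 : rel T1) (e2 : rel T2)
  : rel (T1 * T2) :=
  fun u v => ((u.1 == v.1) && e2 u.2 v.2) || ((u.2 == v.2) && e1 u.1 v.1).

Definition total_2dom (T : finType) (e : rel T) (S : {set T}) : Prop :=
  forall x : T, 2 <= #|[set y in S | e x y]|.

(* gamma_{2t}(G) >= k  iff every total 2-dominating set has size >= k. *)

From mathcomp Require Import all_boot.
From mathcomp Require Import zify.

(* Write r(u) and c(v) for the number of vertices of S in the row {u} x T2 and
   in the column T1 x {v}.  The S-neighbours of (u, v) lie in its row and its
   column, so r(u) + c(v) >= 2, and >= 4 when (u, v) is in S.  If some row is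
   empty every column holds two vertices of S, and symmetrically.  Otherwise
   give every vertex of S the charge w(r(u)) + w(c(v)) with w(1) = 6,
   w(2) = 3, w(k) = 2 for k >= 3: each row and each column collects charge
   at least 6, while each vertex gets at most 8, so 6 (n + m) <= 8 |S|. *)

Definition line_weight (k : nat) : nat :=
  if k == 1 then 6 else if k == 2 then 3 else 2.

Lemma line_weight_total k : 0 < k -> 6 <= k * line_weight k.
Proof. by case: k => [|[|[|k]]] // _; rewrite /line_weight /=; lia. Qed.

Lemma line_weight_pair a b :
  0 < a -> 0 < b -> 4 <= a + b -> line_weight a + line_weight b <= 8.
Proof.
by case: a => [|[|[|a]]] //; case: b => [|[|[|b]]] //; rewrite /line_weight /=; lia.
Qed.

Section FiberCount.
Context {T I : finType} (f : T -> I) (S : {set T}).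

Definition fiber_card (i : I) : nat := #|[set s in S | f s == i]|.

Lemma sum_fiber_card (F : I -> nat) :
  \sum_(s in S) F (f s) = \sum_i fiber_card i * F i.
Proof.
rewrite (partition_big f xpredT) //=; apply: eq_bigr => i _.
rewrite (eq_bigr (fun _ => F i)); last by move=> s /andP[_ /eqP->].
rewrite sum_nat_const; congr (_ * _).
by apply: eq_card => s; rewrite !inE.
Qed.

Lemma card_sum_fiber : #|S| = \sum_i fiber_card i.
Proof.
rewrite -sum1_card (sum_fiber_card (fun=> 1)).
by apply: eq_bigr => i _; rewrite muln1.
Qed.

Lemma fiber_card_lower_bound k :
  (forall i, k <= fiber_card i) -> k * #|I| <= #|S|.
Proof.
move=> fk; rewrite card_sum_fiber -sum1_card big_distrr /=.
by apply: leq_sum => i _; rewrite muln1.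
Qed.

Lemma weight_fiber_lower_bound :
  (forall i, 0 < fiber_card i) ->
  6 * #|I| <= \sum_(s in S) line_weight (fiber_card (f s)).
Proof.
move=> f_pos; rewrite (sum_fiber_card (fun i => line_weight (fiber_card i))).
rewrite -sum1_card big_distrr /=; apply: leq_sum => i _.
by rewrite muln1 line_weight_total.
Qed.

End FiberCount.

Section CartesianProduct.
Context {T1 T2 : finType} {e1 : rel T1} {e2 : rel T2}.
Hypotheses (irr1 : irreflexive e1) (irr2 : irreflexive e2).

Lemma cart_prod_neighbours_subset (S : {set T1 * T2}) (x : T1 * T2) :
  [set y in S | cart_prod e1 e2 x y] \subset
    ([set s in S | s.1 == x.1] :\ x) :|: ([set s in S | s.2 == x.2] :\ x).
Proof.
case: x => u v; apply/subsetP => -[x y]; rewrite !inE /cart_prod /=.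
case/andP=> xyS /orP[/andP[/eqP ex e] | /andP[/eqP ey e]]; subst.
- rewrite xyS eqxx /=; apply/orP; left; rewrite andbT.
  by apply/negP => /eqP[ey]; rewrite ey irr2 in e.
- rewrite xyS eqxx /=; apply/orP; right; rewrite andbT.
  by apply/negP => /eqP[ex]; rewrite ex irr1 in e.
Qed.

Lemma total_2dom_row_col {S : {set T1 * T2}} :
  total_2dom (cart_prod e1 e2) S -> forall u v,
  2 + 2 * ((u, v) \in S) <= fiber_card fst S u + fiber_card snd S v.
Proof.
move=> domS u v.
have nbhs := subset_leq_card (cart_prod_neighbours_subset S (u, v)).
have := leq_trans (leq_trans (domS (u, v)) nbhs) (leq_card_setU _ _) => /=.
rewrite /fiber_card !(cardsD1 (u, v) [set s in S | _ == _]) !inE !eqxx !andbT.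
set r := #|_ :\ _|; set c := #|_ :\ _|.
by case: ((u, v) \in S) => /=; lia.
Qed.

End CartesianProduct.

Theorem corollary10 (T1 T2 : finType) (e1 : rel T1) (e2 : rel T2) :
  simple_graph e1 -> simple_graph e2 ->
  no_isolated e1 -> no_isolated e2 ->
  2 <= #|T1| -> 2 <= #|T2| ->
  forall S : {set T1 * T2}, total_2dom (cart_prod e1 e2) S ->
    3 * minn #|T1| #|T2| <= 2 * #|S|.
Proof.
move=> [_ irr1] [_ irr2] _ _ _ _ S domS.
have row_col := total_2dom_row_col irr1 irr2 domS.
have [u row0 | no_empty_row] := pickP (fun u => fiber_card fst S u == 0).
  have : 2 * #|T2| <= #|S|.
    apply: (fiber_card_lower_bound snd) => v.
    by have := row_col u v; move/eqP: row0 => ->; lia.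
  by lia.
have [v col0 | no_empty_col] := pickP (fun v => fiber_card snd S v == 0).
  have : 2 * #|T1| <= #|S|.
    apply: (fiber_card_lower_bound fst) => u.
    by have := row_col u v; move/eqP: col0 => ->; lia.
  by lia.
have row_pos u : 0 < fiber_card fst S u by rewrite lt0n no_empty_row.
have col_pos v : 0 < fiber_card snd S v by rewrite lt0n no_empty_col.
have rows := weight_fiber_lower_bound _ _ row_pos.
have cols := weight_fiber_lower_bound _ _ col_pos.
have charge : \sum_(s in S) line_weight (fiber_card fst S s.1)
            + \sum_(s in S) line_weight (fiber_card snd S s.2) <= 8 * #|S|.
  rewrite -big_split -sum1_card big_distrr /=; apply: leq_sum => -[u v] uvS /=.
  rewrite muln1 line_weight_pair //.
  by have := row_col u v; rewrite uvS.
have := leq_trans (leq_add rows cols) charge.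
by lia.
Qed.
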